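(* For every $\omega>0$, $$\|\mathcal F_\omega^{-1}\mathcal R\|_2<\frac{2\sqrt{\omega^2+\nu^2}}{\omega},$$ where $\nu$ is the largest diagonal entry of $D$.
   Context: Let $M\ge 1$ be an integer and let $I$ denote an identity matrix of the appropriate size. Let $T\in\mathbb R^{M\times M}$ be real symmetric positive definite. Let $D=\operatorname{diag}(d_1,\dots,d_M)$ with $d_j\ge0$, and $\nu=\max_j d_j$. Define the block matrices in $\mathbb R^{2M\times 2M}$: $$\mathcal R=\begin{bmatrix} I & T-D\\ D-T & I\end{bmatrix},\qquad \mathcal T=\begin{bmatrix} I & T\\ -T & I\end{bmatrix},\qquad \mathcal D=\begin{bmatrix} 0 & -D\\ D & 0\end{bmatrix}.$$ Thus $\mathcal R=\mathcal T+\mathcal D$. For $\omega>0$, the NASS preconditioner is $$\mathcal F_\omega=\tfrac{1}{2\omega}(\omega I+\mathcal T)(\omega I+\mathcal D).$$ *)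

From HB Require Import structures.
From mathcomp Require Import all_boot all_order all_algebra.
From mathcomp Require Import classical_sets reals.
Set Implicit Arguments. Unset Strict Implicit. Unset Printing Implicit Defensive.
Import Order.TTheory GRing.Theory Num.Theory.
Local Open Scope ring_scope.
Local Open Scope classical_set_scope.

Section Defs.
Variable R : realType.

Definition vnorm2 n (x : 'cV[R]_n) : R := Num.sqrt (\sum_i (x i 0) ^+ 2).

Definition opnorm2 m n (A : 'M[R]_(m, n)) : R :=
  sup [set r : R | exists2 x : 'cV[R]_n, x != 0 & r = vnorm2 (A *m x) / vnorm2 x].

Variable M : nat.

Definition Dmat (d : 'rV[R]_M) : 'M[R]_M := diag_mx d.

(* nu = max_j d_j  (d_j >= 0, M >= 1, so starting the max at 0 is harmless) *)
Definition nu (d : 'rV[R]_M) : R := \big[Num.max/0]_(j < M) d 0 j.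

Definition calR (T : 'M[R]_M) (d : 'rV[R]_M) : 'M[R]_(M + M) :=
  block_mx 1%:M (T - Dmat d) (Dmat d - T) 1%:M.

Definition calT (T : 'M[R]_M) : 'M[R]_(M + M) :=
  block_mx 1%:M T (- T) 1%:M.

Definition calD (d : 'rV[R]_M) : 'M[R]_(M + M) :=
  block_mx 0 (- Dmat d) (Dmat d) 0.

Definition NASS_F (T : 'M[R]_M) (d : 'rV[R]_M) (omega : R) : 'M[R]_(M + M) :=
  (2 * omega)^-1 *: ((omega%:M + calT T) *m (omega%:M + calD d)).

End Defs.

(* Write [calT = 1 + S] with [S] skew-symmetric (as [T] is symmetric); [calD] is
   skew-symmetric too, and [calR = calT + calD].  With [P = w + calT] and
   [Q = w + calD] one has [P Q - (w - calT)(w - calD) = 2 w calR], hence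
   [F^-1 calR = 1 - Q^-1 (w - calT) P^-1 (w - calD)].  For skew [S],
   [|(a + S) y|^2 = a^2 |y|^2 + |S y|^2], which gives [|Q^-1| <= 1/w],
   [|w - calD| <= sqrt (w^2 + nu^2)] and, with [K] bounding [|S|^2],
   [|(w - calT) P^-1|^2 <= ((w - 1)^2 + K) / ((w + 1)^2 + K) < 1].  So the
   norm is below [1 + sqrt (w^2 + nu^2) / w <= 2 sqrt (w^2 + nu^2) / w]. *)

From HB Require Import structures.
From mathcomp Require Import all_boot all_order all_algebra.
From mathcomp Require Import classical_sets reals.
From mathcomp Require Import ring lra.
Import Order.TTheory GRing.Theory Num.Theory.
Set Implicit Arguments. Unset Strict Implicit. Unset Printing Implicit Defensive.
Local Open Scope ring_scope.

Section SquaredNorm.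
Variable R : realType.
Implicit Types (n : nat) (a k : R).

Definition sqnorm n (x : 'cV[R]_n) : R := \sum_i x i 0 ^+ 2.
Definition cvdot n (x y : 'cV[R]_n) : R := (x^T *m y) 0 0.

Lemma cvdotE n (x y : 'cV[R]_n) : cvdot x y = \sum_i x i 0 * y i 0.
Proof. by rewrite /cvdot mxE; apply: eq_bigr => i _; rewrite mxE. Qed.

Lemma sqnorm_ge0 n (x : 'cV[R]_n) : 0 <= sqnorm x.
Proof. by apply: sumr_ge0 => i _; rewrite sqr_ge0. Qed.

Lemma sqnorm_eq0 n (x : 'cV[R]_n) : (sqnorm x == 0) = (x == 0).
Proof.
apply/idP/eqP => [|->]; last by rewrite /sqnorm big1 // => i _; rewrite mxE expr0n.
rewrite psumr_eq0 => [/allP x0|i _]; last exact: sqr_ge0.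
apply/matrixP => i j; rewrite (ord1 j) mxE.
by apply/eqP; rewrite -sqrf_eq0; exact: x0 (mem_index_enum _).
Qed.

Lemma sqnorm_gt0 n (x : 'cV[R]_n) : (0 < sqnorm x) = (x != 0).
Proof. by rewrite lt_def sqnorm_ge0 sqnorm_eq0 andbT. Qed.

Lemma sqnormD n (x y : 'cV[R]_n) :
  sqnorm (x + y) = sqnorm x + 2 * cvdot x y + sqnorm y.
Proof.
rewrite /sqnorm cvdotE mulr_sumr -!big_split /=.
by apply: eq_bigr => i _; rewrite mxE; ring.
Qed.

Lemma sqnormZ n a (x : 'cV[R]_n) : sqnorm (a *: x) = a ^+ 2 * sqnorm x.
Proof. by rewrite /sqnorm mulr_sumr; apply: eq_bigr => i _; rewrite mxE; ring. Qed.

Lemma sqnormN n (x : 'cV[R]_n) : sqnorm (- x) = sqnorm x.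
Proof. by rewrite -scaleN1r sqnormZ sqrrN expr1n mul1r. Qed.

Lemma sqnorm_col_mx n1 n2 (u : 'cV[R]_n1) (v : 'cV[R]_n2) :
  sqnorm (col_mx u v) = sqnorm u + sqnorm v.
Proof.
by rewrite /sqnorm big_split_ord; congr (_ + _); apply: eq_bigr => i _;
  rewrite ?col_mxEu ?col_mxEd.
Qed.

Lemma cvdotZl n a (x y : 'cV[R]_n) : cvdot (a *: x) y = a * cvdot x y.
Proof. by rewrite /cvdot linearZ /= -scalemxAl mxE. Qed.

(* [y^T S y] is a [1 x 1] matrix, hence equal to its transpose [- y^T S y]. *)
Lemma cvdot_skew n (S : 'M[R]_n) (y : 'cV[R]_n) :
  S^T = - S -> cvdot y (S *m y) = 0.
Proof.
move=> skewS; set u := y^T *m (S *m y).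
have uN : u^T = - u.
  by rewrite /u !trmx_mul trmxK skewS mulmxN mulNmx mulmxA.
have : u^T 0 0 = (- u) 0 0 by rewrite uN.
rewrite [u^T _ _]mxE [(- u) _ _]mxE /cvdot -/u => /eqP.
by rewrite -addr_eq0 -mulr2n mulrn_eq0 => /eqP.
Qed.

Lemma sqnorm_shift_skew n a (S : 'M[R]_n) (y : 'cV[R]_n) : S^T = - S ->
  sqnorm ((a%:M + S) *m y) = a ^+ 2 * sqnorm y + sqnorm (S *m y).
Proof.
move=> skewS; rewrite mulmxDl mul_scalar_mx sqnormD cvdotZl cvdot_skew //.
by rewrite sqnormZ; ring.
Qed.

Lemma sqr_sum_le n (z : 'I_n -> R) : (\sum_i z i) ^+ 2 <= n%:R * \sum_i z i ^+ 2.
Proof.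
have -> : (\sum_i z i) ^+ 2 = \sum_i \sum_j z i * z j.
  by rewrite expr2 mulr_suml; apply: eq_bigr => i _; rewrite mulr_sumr.
apply: (@le_trans _ _ (\sum_i \sum_(j < n) (z i ^+ 2 / 2 + z j ^+ 2 / 2))).
  by apply: ler_sum => i _; apply: ler_sum => j _; have := sqr_ge0 (z i - z j); lra.
under eq_bigr do rewrite big_split /= sumr_const card_ord.
rewrite big_split /= sumr_const card_ord sumrMnl -big_distrl /=.
by rewrite -mulrnDl -splitr mulr_natl.
Qed.

Lemma sqnorm_mulmx_le m n (A : 'M[R]_(m, n)) :
  exists2 K, 0 < K & forall y, sqnorm (A *m y) <= K * sqnorm y.
Proof.
set K0 := n%:R * \sum_i \sum_j A i j ^+ 2.
have K0ge0 : 0 <= K0.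
  rewrite mulr_ge0 ?ler0n ?sumr_ge0 // => i _.
  by rewrite sumr_ge0 // => j _; rewrite sqr_ge0.
exists (K0 + 1) => [|y]; first lra.
apply: (@le_trans _ _ (K0 * sqnorm y)); last first.
  by rewrite ler_wpM2r ?sqnorm_ge0 ?lerDl.
rewrite /sqnorm -mulrA mulr_suml mulr_sumr; apply: ler_sum => i _.
rewrite mxE; apply: (le_trans (sqr_sum_le _)).
rewrite ler_wpM2l ?ler0n // mulr_sumr; apply: ler_sum => j _.
rewrite exprMn ler_wpM2r ?sqr_ge0 //.
by rewrite (bigD1 j) //= lerDl sumr_ge0 // => l _; rewrite sqr_ge0.
Qed.

(* The cross term is split as [2 x e <= k x^2 + e^2 / k]. *)
Lemma sqnormD_le n k (x e : 'cV[R]_n) : 0 < k ->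
  sqnorm e <= k ^+ 2 * sqnorm x -> sqnorm (x + e) <= (1 + k) ^+ 2 * sqnorm x.
Proof.
move=> k_gt0 ek.
have cross : 2 * cvdot x e <= k * sqnorm x + sqnorm e / k.
  rewrite cvdotE /sqnorm !mulr_sumr big_distrl -big_split /=.
  apply: ler_sum => i _; set a := x i 0; set b := e i 0.
  have -> : k * a ^+ 2 + b ^+ 2 / k = (k * a - b) ^+ 2 / k + 2 * (a * b).
    by field; rewrite gt_eqF.
  by rewrite lerDr divr_ge0 ?sqr_ge0 ?(ltW k_gt0).
have ek' : sqnorm e / k <= k * sqnorm x by rewrite ler_pdivrMr // mulrAC -expr2.
rewrite sqnormD; have := sqnorm_ge0 x; nra.
Qed.

Lemma vnorm2_ratio_le n k (x v : 'cV[R]_n) : x != 0 -> 0 < k ->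
  sqnorm (v - x) <= k ^+ 2 * sqnorm x -> vnorm2 v / vnorm2 x <= 1 + k.
Proof.
rewrite -sqnorm_gt0 => x_gt0 k_gt0 /(sqnormD_le k_gt0); rewrite addrC subrK => vx.
rewrite ler_pdivrMr ?sqrtr_gt0 // -[1 + k]ger0_norm; last lra.
by rewrite -sqrtr_sqr -sqrtrM ?sqr_ge0 // ler_wsqrtr.
Qed.

Lemma unitmx_col_inj n (A : 'M[R]_n) :
  (forall x : 'cV[R]_n, A *m x = 0 -> x = 0) -> A \in unitmx.
Proof.
move=> Ainj; rewrite unitmxE unitfE -det_tr; apply/det0P => -[v v0 vA].
have : v^T = 0 by apply: Ainj; rewrite -[A]trmxK -trmx_mul vA trmx0.
by move/eqP; rewrite trmx_eq0 (negPf v0).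
Qed.

Lemma skew_shift_unitmx n a (S : 'M[R]_n) : a != 0 -> S^T = - S ->
  a%:M + S \in unitmx.
Proof.
move=> a0 skewS; apply: unitmx_col_inj => y /eqP.
rewrite -sqnorm_eq0 sqnorm_shift_skew // => /eqP Sy0.
have ay : a ^+ 2 * sqnorm y <= 0 by have := sqnorm_ge0 (S *m y); lra.
apply/eqP; rewrite -sqnorm_eq0 eq_le sqnorm_ge0 andbT.
have a2 : 0 < a ^+ 2 by rewrite exprn_even_gt0.
by rewrite -(pmulr_rle0 _ a2).
Qed.

Lemma opnorm2_le m n (A : 'M[R]_(m, n)) c : (0 < n)%N ->
  (forall x, x != 0 -> vnorm2 (A *m x) / vnorm2 x <= c) -> opnorm2 A <= c.
Proof.
move=> n_gt0 Ac; apply: ge_sup => [|_ [x x0 ->]]; last exact: Ac.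
pose u : 'cV[R]_n := const_mx 1.
have u0 : u != 0.
  by apply/eqP => /matrixP /(_ (Ordinal n_gt0) 0); rewrite !mxE; apply/eqP/oner_neq0.
by exists (vnorm2 (A *m u) / vnorm2 u), u.
Qed.

(* For skew [S] the two factors have squared norms [(w -+ 1)^2 |y|^2 + |S y|^2];
   their ratio is increasing in [|S y|^2 <= K |y|^2] and is therefore uniformly
   bounded away from 1. *)
Lemma sqnorm_cayley_le n w K (S : 'M[R]_n) (y : 'cV[R]_n) :
  0 < w -> S^T = - S -> sqnorm (S *m y) <= K * sqnorm y ->
  sqnorm (((w - 1)%:M - S) *m y) * ((w + 1) ^+ 2 + K)
    <= ((w - 1) ^+ 2 + K) * sqnorm (((w + 1)%:M + S) *m y).
Proof.
move=> w_gt0 skewS SK.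
have skewNS : (- S)^T = - - S by rewrite linearN /= skewS.
rewrite !sqnorm_shift_skew // mulNmx sqnormN.
have : 0 <= (K * sqnorm y - sqnorm (S *m y)) * (4 * w) by apply: mulr_ge0; lra.
nra.
Qed.

End SquaredNorm.

Section ShiftedProduct.
Variables (K : fieldType) (n : nat) (w : K) (A B : 'M[K]_n).

Lemma shift_mul_sub :
  (w%:M + A) *m (w%:M + B) - (w%:M - A) *m (w%:M - B) = (2 * w) *: (A + B).
Proof.
rewrite !mulmxDl !mulmxDr !mulmxN !mulNmx !mul_scalar_mx !mul_mx_scalar.
by apply/matrixP => i j; rewrite !mxE; ring.
Qed.

(* With [P = w + A], [Q = w + B], [F = (2 w)^-1 P Q], the identity above gives
   [F^-1 (A + B) = 1 - Q^-1 P^-1 (w - A) (w - B)], and [P^-1] commutes with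
   [w - A]. *)
Lemma shift_residual (x : 'cV[K]_n) :
  2 * w != 0 -> w%:M + A \in unitmx -> w%:M + B \in unitmx ->
  (w%:M + B) *m ((invmx ((2 * w)^-1 *: ((w%:M + A) *m (w%:M + B))) *m (A + B)) *m x - x)
    = - ((w%:M - A) *m (invmx (w%:M + A) *m ((w%:M - B) *m x))).
Proof.
move=> w2 Pu Qu.
set P := w%:M + A; set Q := w%:M + B; set F := (2 * w)^-1 *: (P *m Q).
have Fu : F \in unitmx by rewrite unitmxZ ?unitmx_mul ?Pu ?Qu // unitfE invr_eq0.
have PQF : P *m Q = (2 * w) *: F by rewrite scalerA mulfV ?scale1r.
have PP' : comm_mx P (w%:M - A).
  apply: comm_mxB; first exact: comm_mx_scalar.
  by apply/comm_mx_sym/comm_mxD; [exact: comm_mx_scalar | exact: comm_mx_refl].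
rewrite -[LHS](mulKmx Pu) -[RHS](mulKmx Pu); congr (_ *m _).
rewrite mulmxN !mulmxA PP' -[_ *m invmx P]mulmxA mulmxV // mulmx1.
rewrite mulmxBr !mulmxA {1}PQF -scalemxAl mulmxV // -scalemxAl mul1mx.
by rewrite -shift_mul_sub -/P -/Q mulmxBl addrAC subrr add0r.
Qed.

End ShiftedProduct.

Section NASS.
Variables (R : realType) (M : nat) (T : 'M[R]_M) (d : 'rV[R]_M).
Hypotheses (symT : T^T = T) (d_ge0 : forall j, 0 <= d 0 j).

Lemma nu_ge j : d 0 j <= nu d.
Proof. by rewrite /nu (bigD1 j) //= le_max lexx. Qed.

Lemma nu_ge0 : 0 <= nu d.
Proof. by rewrite /nu; elim/big_ind: _ => // x y x0 _; rewrite le_max x0. Qed.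

Definition calS : 'M[R]_(M + M) := block_mx 0 T (- T) 0.

Lemma calS_skew : calS^T = - calS.
Proof.
rewrite /calS tr_block_mx opp_block_mx !trmx0 !oppr0 linearN /= symT.
by rewrite opprK.
Qed.

Lemma calT_split : calT T = 1%:M + calS.
Proof. by rewrite /calT /calS (scalar_mx_block M M 1) add_block_mx !addr0 !add0r. Qed.

Lemma calD_skew : (calD d)^T = - calD d.
Proof.
rewrite /calD tr_block_mx opp_block_mx !trmx0 !oppr0 linearN /= /Dmat tr_diag_mx.
by rewrite opprK.
Qed.

Lemma calR_split : calR T d = calT T + calD d.
Proof. by rewrite /calR /calT /calD add_block_mx !addr0 [- T + _]addrC. Qed.

Lemma sqnorm_calD_le (x : 'cV[R]_(M + M)) :
  sqnorm (calD d *m x) <= nu d ^+ 2 * sqnorm x.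
Proof.
have Dle (w : 'cV[R]_M) : sqnorm (Dmat d *m w) <= nu d ^+ 2 * sqnorm w.
  rewrite /sqnorm /Dmat mulr_sumr; apply: ler_sum => i _.
  rewrite mul_diag_mx mxE exprMn ler_wpM2r ?sqr_ge0 // ler_sqr ?nnegrE ?nu_ge //.
  exact: nu_ge0.
rewrite -[x]vsubmxK /calD mul_block_col !mul0mx add0r addr0 mulNmx.
by rewrite !sqnorm_col_mx sqnormN mulrDr addrC lerD.
Qed.

Lemma NASS_error_le (omega : R) : 0 < omega ->
  exists2 c, 0 < c < 1 & forall x : 'cV[R]_(M + M),
  omega ^+ 2 * sqnorm ((invmx (NASS_F T d omega) *m calR T d) *m x - x)
    <= c * (omega ^+ 2 + nu d ^+ 2) * sqnorm x.
Proof.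
move=> omega_gt0; have [K K_gt0 SK] := sqnorm_mulmx_le calS.
set a := (omega - 1) ^+ 2 + K; set b := (omega + 1) ^+ 2 + K.
have a_gt0 : 0 < a by rewrite /a; have := sqr_ge0 (omega - 1); lra.
have b_gt0 : 0 < b by rewrite /b; have := sqr_ge0 (omega + 1); lra.
exists (a / b) => [|x].
  rewrite divr_gt0 //= ltr_pdivrMr // mul1r /a /b ltrD2r.
  by rewrite -subr_gt0 (_ : _ - _ = 4 * omega) ?mulr_gt0 //; ring.
have eP : omega%:M + calT T = (omega + 1)%:M + calS.
  by rewrite calT_split addrA -raddfD.
have eP' : omega%:M - calT T = (omega - 1)%:M - calS.
  by rewrite calT_split opprD addrA -raddfB.
have Pu : omega%:M + calT T \in unitmx.
  by rewrite eP skew_shift_unitmx ?calS_skew // gt_eqF //; lra.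
have Qu : omega%:M + calD d \in unitmx.
  by rewrite skew_shift_unitmx ?calD_skew // gt_eqF.
have skewND : (- calD d)^T = - - calD d by rewrite linearN /= calD_skew.
rewrite calR_split.
apply: (le_trans (y := sqnorm ((omega%:M + calD d) *m
  ((invmx (NASS_F T d omega) *m (calT T + calD d)) *m x - x)))).
  by rewrite sqnorm_shift_skew ?calD_skew // lerDl sqnorm_ge0.
rewrite shift_residual // ?mulf_neq0 ?pnatr_eq0 ?gt_eqF // sqnormN.
set y := invmx _ *m _.
have Py : (omega%:M + calT T) *m y = (omega%:M - calD d) *m x by rewrite mulKVmx.
have Q'x : sqnorm ((omega%:M - calD d) *m x) <= (omega ^+ 2 + nu d ^+ 2) * sqnorm x.
  by rewrite sqnorm_shift_skew // mulNmx sqnormN mulrDl lerD2l sqnorm_calD_le.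
rewrite -mulrA; apply: le_trans (ler_wpM2l (divr_ge0 (ltW a_gt0) (ltW b_gt0)) Q'x).
rewrite -Py eP' eP mulrAC ler_pdivlMr //.
exact: sqnorm_cayley_le omega_gt0 calS_skew (SK y).
Qed.

End NASS.

Theorem mainTheorem8 (R : realType) (M : nat) (T : 'M[R]_M) (d : 'rV[R]_M)
    (omega : R) :
  (0 < M)%N ->
  T^T = T ->
  (forall x : 'cV[R]_M, x != 0 -> 0 < (x^T *m T *m x) 0 0) ->
  (forall j : 'I_M, 0 <= d 0 j) ->
  0 < omega ->
  opnorm2 (invmx (NASS_F T d omega) *m calR T d)
    < 2 * Num.sqrt (omega ^+ 2 + nu d ^+ 2) / omega.
Proof.
move=> M_gt0 symT _ d_ge0 omega_gt0.
have [c /andP[c_gt0 c_lt1] err] := NASS_error_le symT d_ge0 omega_gt0.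
set s2 := omega ^+ 2 + nu d ^+ 2.
have omega2_gt0 : 0 < omega ^+ 2 by rewrite exprn_gt0.
have s2_gt0 : 0 < s2 by rewrite /s2; have := sqr_ge0 (nu d); lra.
set k := Num.sqrt (c * s2) / omega.
have k_gt0 : 0 < k by rewrite divr_gt0 // sqrtr_gt0 mulr_gt0.
apply: (@le_lt_trans _ _ (1 + k)).
  apply: opnorm2_le => [|x x0]; first by rewrite addn_gt0 M_gt0.
  apply: vnorm2_ratio_le => //.
  rewrite expr_div_n sqr_sqrtr ?(mulr_ge0 (ltW c_gt0) (ltW s2_gt0)) //.
  rewrite [c * s2 / _ * _]mulrAC.
  by rewrite ler_pdivlMr // [_ * omega ^+ 2]mulrC err.
have omega_le : omega <= Num.sqrt s2.
  by rewrite -(ger0_norm (ltW omega_gt0)) -sqrtr_sqr ler_wsqrtr // lerDl sqr_ge0.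
have cs2_lt : Num.sqrt (c * s2) < Num.sqrt s2.
  by rewrite ltr_sqrt // gtr_pMl.
rewrite /k ltr_pdivlMr // mulrDl mul1r divfK ?gt_eqF //.
lra.
Qed.
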